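(* Let $p$ be a prime, $n\ge 1$, and let $M_n,M_n'\in\mathrm{Sym}_n(\mathbb{Z}_p)$ be nonsingular. Then $(\mathrm{Cok}(M_n),\langle\cdot,\cdot\rangle)\simeq(\mathrm{Cok}(M_n'),\langle\cdot,\cdot\rangle)$ if and only if there exists a nonsingular $M_n''\in\mathrm{Sym}_n(\mathbb{Z}_p)$ such that $M_n''$ is congruent to $M_n'$ and $M_n^{-1}-(M_n'')^{-1}\in\mathrm{Sym}_n(\mathbb{Z}_p)$.
   Context: $\mathbb{Z}_p$ denotes the $p$-adic integers and $\mathrm{Sym}_n(R)$ the $n\times n$ symmetric matrices over $R$. Two matrices $A,B\in\mathrm{Sym}_n(\mathbb{Z}_p)$ are congruent if $B=UAU^T$ for some $U\in\mathrm{GL}_n(\mathbb{Z}_p)$. For nonsingular $M\in\mathrm{Sym}_n(\mathbb{Z}_p)$, $\mathrm{Cok}(M):=\mathbb{Z}_p^n/M\mathbb{Z}_p^n$ is a finite abelian $p$-group equipped with the symmetric pairing $\langle x,y\rangle:=X^TM^{-1}Y \bmod \mathbb{Z}_p\in\mathbb{Q}_p/\mathbb{Z}_p$, where $X,Y\in\mathbb{Z}_p^n$ are lifts of $x,y$; this pairing is perfect. An isomorphism of two such groups with pairings is a group isomorphism preserving the pairings. *)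

From mathcomp Require Import all_boot all_order all_algebra.
From mathcomp Require Export fraction.
Set Implicit Arguments. Unset Strict Implicit. Unset Printing Implicit Defensive.
Import GRing.Theory.
Local Open Scope ring_scope.

(* R is (a model of) the ring of p-adic integers Z_p: a complete discrete
   valuation ring with uniformizer p and residue field F_p.  These axioms
   characterize Z_p up to unique isomorphism. *)
Record is_padic_integers (p : nat) (R : idomainType) : Prop := {
  padic_prime : prime p;
  padic_p_neq0 : (p%:R : R) != 0;
  padic_p_nonunit : (p%:R : R) \notin GRing.unit;
  padic_dvr : forall x : R, x != 0 ->
    exists k : nat, exists u : R, u \is a GRing.unit /\ x = p%:R ^+ k * u;
  padic_residue : forall x : R, exists a : int, exists y : R,
    x = a%:~R + p%:R * y;
  padic_complete : forall x : nat -> R,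
    (forall k : nat, exists y : R, x k.+1 - x k = p%:R ^+ k * y) ->
    exists l : R, forall k : nat, exists y : R, l - x k = p%:R ^+ k * y
}.

Section Defs.
Variable R : idomainType.
Local Notation K := {fraction R}.

(* the image of R = Z_p inside its fraction field K = Q_p *)
Definition inZ (x : K) : Prop := exists r : R, x = @FracField.tofrac R r.

Definition sym_mx {n : nat} (M : 'M[R]_n) : Prop := M^T = M.
Definition nonsingular {n : nat} (M : 'M[R]_n) : Prop := \det M != 0.

Definition congruent {n : nat} (A B : 'M[R]_n) : Prop :=
  exists U : 'M[R]_n, U \in unitmx /\ B = U *m A *m U^T.

Definition invK {n : nat} (M : 'M[R]_n) : 'M[K]_n := invmx (map_mx (fun r : R => @FracField.tofrac R r) M).

Definition in_SymZ {n : nat} (D : 'M[K]_n) : Prop :=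
  exists S : 'M[R]_n, sym_mx S /\ D = map_mx (fun r : R => @FracField.tofrac R r) S.

(* X = Y in Cok(M) = Z_p^n / M Z_p^n *)
Definition cok_eq {n : nat} (M : 'M[R]_n) (X Y : 'cV[R]_n) : Prop :=
  exists Z : 'cV[R]_n, X - Y = M *m Z.

(* the pairing <x,y> = X^T M^{-1} Y, as an element of Q_p (to be read mod Z_p) *)
Definition cok_pair {n : nat} (M : 'M[R]_n) (X Y : 'cV[R]_n) : K :=
  ((map_mx (fun r : R => @FracField.tofrac R r) X)^T *m invK M *m map_mx (fun r : R => @FracField.tofrac R r) Y) 0 0.

(* An isomorphism (Cok M, <,>) ~ (Cok M', <,>), given through a function phi
   on lifts Z_p^n -> Z_p^n: it induces a well-defined injective map
   Cok M -> Cok M', which is surjective, additive, and preserves the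
   Q_p/Z_p-valued pairings. *)
Definition cok_pair_iso {n : nat} (M M' : 'M[R]_n) : Prop :=
  exists phi : 'cV[R]_n -> 'cV[R]_n,
    [/\ (forall X Y, cok_eq M X Y <-> cok_eq M' (phi X) (phi Y)),
        (forall Y', exists X, cok_eq M' (phi X) Y'),
        (forall X Y, cok_eq M' (phi (X + Y)) (phi X + phi Y)) &
        (forall X Y, inZ (cok_pair M' (phi X) (phi Y) - cok_pair M X Y))].
End Defs.

From HB Require Import structures.
From mathcomp Require Import all_boot all_order all_algebra ring.
From Stdlib Require Import ClassicalEpsilon.
Set Implicit Arguments. Unset Strict Implicit. Unset Printing Implicit Defensive.
Import GRing.Theory.
Local Open Scope ring_scope.

(* If M' = U M'' U^T with U invertible, X |-> U X is an isometry from Cok M''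
   onto Cok M'; if M^-1 - M''^-1 is integral, then M Z_p^n = M'' Z_p^n (a vector
   X lies in M Z_p^n iff M^-1 X is integral) and the two pairings differ by
   integers. Conversely, an isometry phi of Cok M onto Cok M' is additive, hence
   Z-linear, hence Z_p-linear because det M * det M' kills both cokernels and Z
   is dense in Z_p; so phi is X |-> A X mod M' for some matrix A, and
   surjectivity gives A D + M' E = 1. Stable range one for matrices over F_p
   then yields an invertible lift A + M' C of phi, and M'' = A^-1 M' A^-T works:
   its pairing is the pairing of M' transported by A + M' C, so preservation of
   the pairings says exactly that M^-1 - M''^-1 is integral. *)

Section StableRange.
Variables (F : fieldType) (n : nat).
Implicit Types a b c d e : 'M[F]_n.

Lemma kermx_add_rank1_ltmx a (v w : 'rV[F]_n) (y : 'cV[F]_n) :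
  (v <= kermx a)%MS -> (v *m y) 0 0 != 0 -> ~~ (w <= a)%MS ->
  (kermx (a + y *m w) < kermx a)%MS.
Proof.
move=> va vy wa; have w_neq0 : w != 0 by apply: contra wa => /eqP ->; apply: sub0mx.
have a'E (x : 'rV[F]_n) : x *m (a + y *m w) = x *m a + (x *m y) 0 0 *: w.
  by rewrite mulmxDr mulmxA {1}[x *m y]mx11_scalar mul_scalar_mx.
rewrite ltmxE; apply/andP; split.
  apply/row_subP => r; set x := row r _.
  have : (x <= kermx (a + y *m w))%MS by apply: row_sub.
  rewrite !sub_kermx a'E; have [->|xy] := eqVneq ((x *m y) 0 0) 0.
    by rewrite scale0r addr0.
  rewrite addrC addr_eq0 => /eqP xyw; case/negP: wa.
  by rewrite -[w](scalerK xy) xyw scalemx_sub // -mulNmx submxMl.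
apply: contra w_neq0 => /(submx_trans va); rewrite sub_kermx a'E.
by move: va; rewrite sub_kermx => /eqP ->; rewrite add0r scaler_eq0 (negPf vy).
Qed.

Lemma mx_stable_range_l a b :
  (exists d e, d *m a + e *m b = 1%:M) -> exists c, a + c *m b \in unitmx.
Proof.
(* Induction on dim ker a: adding e_j (row i of b), where v_j != 0 for some v
   in ker a and row i of b is not in the row space of a, shrinks the kernel. *)
case=> d [e]; move: {2}(\rank (kermx a)) (leqnn (\rank (kermx a))) => k.
elim: k a e => [|k IH] a e rk hde.
  exists 0; rewrite mul0mx addr0 -row_free_unit -kermx_eq0.
  by rewrite -mxrank_eq0 -leqn0.
have [au|anu] := boolP (a \in unitmx).
  by exists 0; rewrite mul0mx addr0.
have /existsP [j vj] : [exists j, nz_row (kermx a) 0 j != 0].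
  apply: contraR anu => /existsPn v0; rewrite -row_free_unit -kermx_eq0 -nz_row_eq0.
  by apply/eqP/matrixP => i j; rewrite ord1 mxE; apply/eqP/negPn.
have /existsP [i bi] : [exists i, ~~ (row i b <= a)%MS].
  apply: contraR anu => /existsPn ba; rewrite -row_full_unit -sub1mx -hde.
  rewrite addmx_sub ?submxMl // mulmx_sub //; apply/row_subP => i.
  exact/negPn/ba.
have lt := kermx_add_rank1_ltmx (nz_row_sub (kermx a)) _ bi.
have [c hc] : exists c, a + delta_mx j i *m b + c *m b \in unitmx.
  apply: (IH _ (e - d *m delta_mx j i)).
  - rewrite -ltnS; apply: leq_trans rk; apply: rank_ltmx.
    by rewrite -(mul_delta_mx (0 : 'I_1)) -mulmxA -rowE; apply: lt; rewrite -colE mxE.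
  - by rewrite mulmxDr mulmxBl !mulmxA addrACA subrr addr0.
by exists (delta_mx j i + c); rewrite mulmxDl addrA.
Qed.

Lemma mx_stable_range a b :
  (exists d e, a *m d + b *m e = 1%:M) -> exists c, a + b *m c \in unitmx.
Proof.
case=> d [e hde]; have [|c hc] := @mx_stable_range_l a^T b^T.
  by exists d^T, e^T; rewrite -!trmx_mul -raddfD /= hde trmx1.
by exists c^T; rewrite -unitmx_tr raddfD /= trmx_mul trmxK.
Qed.

End StableRange.

Lemma invmx_congr (F : comUnitRingType) n (V N : 'M[F]_n) :
  V \in unitmx -> N \in unitmx -> V^T *m invmx (V *m N *m V^T) *m V = invmx N.
Proof.
move=> V_unit N_unit; have Vt_unit : V^T \in unitmx by rewrite unitmx_tr.
set W := V *m N *m V^T.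
have W_unit : W \in unitmx by rewrite !unitmx_mul N_unit V_unit Vt_unit.
have VNE : V *m N = W *m invmx V^T by rewrite mulmxK.
rewrite -[LHS]mulmx1 -(mulmxV N_unit) mulmxA.
suff -> : V^T *m invmx W *m V *m N = 1%:M by rewrite mul1mx.
by rewrite -mulmxA VNE mulmxA (mulmxKV W_unit) (mulmxV Vt_unit).
Qed.

Lemma surj_mulmx_add_eq1 (R : comPzRingType) n (A B : 'M[R]_n) :
  (forall Y : 'cV[R]_n, exists X, exists Z, A *m X + B *m Z = Y) ->
  exists D, exists E, A *m D + B *m E = 1%:M.
Proof.
move=> AB_surj; have /fin_all_exists [XZ XZE] : forall j : 'I_n,
    exists XZ : 'cV[R]_n * 'cV[R]_n, A *m XZ.1 + B *m XZ.2 = delta_mx j 0.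
  by move=> j; have [X [Z XZE]] := AB_surj (delta_mx j 0); exists (X, Z).
exists (\sum_j (XZ j).1 *m delta_mx 0 j), (\sum_j (XZ j).2 *m delta_mx 0 j).
rewrite !mulmx_sumr -big_split mx1_sum_delta; apply: eq_bigr => j _ /=.
by rewrite !mulmxA -mulmxDl XZE mul_delta_mx.
Qed.

Section Residue.
Variables (p : nat) (R : idomainType).
Hypothesis HR : is_padic_integers p R.

Let p_prime : prime p := padic_prime HR.

Lemma dvdz_of_intr_mulp (c : int) (y : R) : c%:~R = p%:R * y -> (p%:Z %| c)%Z.
Proof.
move=> cE; apply: contraLR (padic_p_nonunit HR) => p_ndvd_c; rewrite negbK.
have /coprimezP [[u v] /= uvE] : coprimez p c.
  by rewrite coprimezE prime_coprime // -dvdzE.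
apply/unitrP; exists (u%:~R + v%:~R * y).
suff pE : p%:R * (u%:~R + v%:~R * y) = 1 :> R by rewrite mulrC pE.
by rewrite -[RHS](congr1 intr uvE) intrD !intrM cE; ring.
Qed.

Definition residue (x : R) : int :=
  proj1_sig (constructive_indefinite_description _ (padic_residue HR x)).

Lemma residueP x : exists y, x = (residue x)%:~R + p%:R * y.
Proof. by rewrite /residue; case: constructive_indefinite_description. Qed.

Definition red (x : R) : 'F_p := (residue x)%:~R.

Lemma red_intr_mulp x (a : int) y : x = a%:~R + p%:R * y -> red x = a%:~R.
Proof.
move=> xE; have [y' xE'] := residueP x; apply/eqP; rewrite -subr_eq0 -intrB.
have /dvdz_of_intr_mulp/dvdzP [q ->] : (residue x - a)%:~R = p%:R * (y - y') :> R.
  by rewrite intrB -[(residue x)%:~R](addrK (p%:R * y')) -xE' xE; ring.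
by rewrite intrM -[(p%:Z)%:~R]/(p%:R) (pchar_Fp_0 p_prime) mulr0.
Qed.

Lemma redB : {morph red : x y / x - y}.
Proof.
move=> x y; have [s xE] := residueP x; have [t yE] := residueP y.
rewrite (@red_intr_mulp _ (residue x - residue y) (s - t)) ?intrB //.
by rewrite {1}xE {1}yE; ring.
Qed.

Lemma redM : {morph red : x y / x * y}.
Proof.
move=> x y; have [s xE] := residueP x; have [t yE] := residueP y.
pose z := (residue x)%:~R * t + s * (residue y)%:~R + p%:R * s * t.
rewrite (@red_intr_mulp _ (residue x * residue y) z); first by rewrite intrM.
by rewrite /z intrM {1}xE {1}yE; ring.
Qed.

Lemma red1 : red 1 = 1.
Proof. by rewrite (@red_intr_mulp 1 1 0) // mulr0 addr0. Qed.

HB.instance Definition _ := GRing.isZmodMorphism.Build R 'F_p red redB.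
HB.instance Definition _ := GRing.isMonoidMorphism.Build R 'F_p red (red1, redM).

Lemma unitr_of_red (x : R) : red x != 0 -> x \is a GRing.unit.
Proof.
have [->|x_neq0] := eqVneq x 0; first by rewrite rmorph0 eqxx.
have [[|k] [u [u_unit ->]]] := padic_dvr HR x_neq0; first by rewrite mul1r.
by rewrite (@red_intr_mulp _ 0 (p%:R ^+ k * u)) ?eqxx // add0r exprS mulrA.
Qed.

Lemma red_natr (c : 'F_p) : red (c : nat)%:R = c.
Proof. by rewrite (@red_intr_mulp _ (c : nat) 0) ?mulr0 ?addr0 // -pmulrn natr_Zp. Qed.

Lemma unitmx_of_red m (A : 'M[R]_m) : map_mx red A \in unitmx -> A \in unitmx.
Proof. by rewrite !unitmxE det_map_mx unitfE; apply: unitr_of_red. Qed.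

Lemma red_mx_surj m k (c : 'M['F_p]_(m, k)) : exists C, map_mx red C = c.
Proof.
by exists (\matrix_(i, j) (c i j : nat)%:R); apply/matrixP => i j; rewrite !mxE red_natr.
Qed.

Lemma intr_approx_expn k (x : R) : exists a : int, exists y, x = a%:~R + p%:R ^+ k * y.
Proof.
elim: k x => [|k IH] x; first by exists 0, x; rewrite expr0 mul1r add0r.
have [a [y ->]] := IH x; have [b [z ->]] := padic_residue HR y.
exists (a + (p ^ k)%:Z * b), z.
by rewrite intrD intrM -[((p ^ k)%:Z)%:~R]/((p ^ k)%:R) natrX exprS; ring.
Qed.

Lemma intr_approx (q x : R) : q != 0 -> exists a : int, exists y, x = a%:~R + q * y.
Proof.
case/(padic_dvr HR) => k [u [u_unit ->]]; have [a [y ->]] := intr_approx_expn k x.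
by exists a, (u^-1 * y); rewrite -mulrA mulVKr.
Qed.

End Residue.

Section Cokernel.
Variables (R : idomainType) (n : nat) (M : 'M[R]_n).
Implicit Types X Y Z W : 'cV[R]_n.

Lemma cok_eq_refl X : cok_eq M X X.
Proof. by exists 0; rewrite subrr mulmx0. Qed.

Lemma cok_eq_sym X Y : cok_eq M X Y -> cok_eq M Y X.
Proof. by case=> Z XYE; exists (- Z); rewrite mulmxN -XYE opprB. Qed.

Lemma cok_eq_trans X Y W : cok_eq M X Y -> cok_eq M Y W -> cok_eq M X W.
Proof.
by case=> Z XYE [Z' YWE]; exists (Z + Z'); rewrite mulmxDr -XYE -YWE addrA subrK.
Qed.

Lemma cok_eqD X1 X2 Y1 Y2 :
  cok_eq M X1 Y1 -> cok_eq M X2 Y2 -> cok_eq M (X1 + X2) (Y1 + Y2).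
Proof.
by case=> Z1 E1 [Z2 E2]; exists (Z1 + Z2); rewrite mulmxDr -E1 -E2 opprD addrACA.
Qed.

Lemma cok_eqN X Y : cok_eq M X Y -> cok_eq M (- X) (- Y).
Proof. by case=> Z XYE; exists (- Z); rewrite mulmxN -XYE opprD. Qed.

Lemma cok_eq_sum I (s : seq I) (F G : I -> 'cV[R]_n) :
  (forall i, cok_eq M (F i) (G i)) ->
  cok_eq M (\sum_(i <- s) F i) (\sum_(i <- s) G i).
Proof.
move=> FG; elim: s => [|i s IH]; first by rewrite !big_nil; apply: cok_eq_refl.
by rewrite !big_cons; apply: cok_eqD.
Qed.

Lemma cok_eq_addl X Z : cok_eq M (X + M *m Z) X.
Proof. by exists Z; rewrite addrC addKr. Qed.

Lemma cok_eq_add_det X Y : cok_eq M (X + \det M *: Y) X.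
Proof. by rewrite -mul_scalar_mx -mul_mx_adj -mulmxA; apply: cok_eq_addl. Qed.

End Cokernel.

Section CokernelAdditive.
Variables (p : nat) (R : idomainType).
Hypothesis HR : is_padic_integers p R.
Variables (n : nat) (M N : 'M[R]_n).
Hypotheses (nsM : nonsingular M) (nsN : nonsingular N).
Variable phi : 'cV[R]_n -> 'cV[R]_n.
Hypothesis phi_cok_eq : forall X Y, cok_eq M X Y -> cok_eq N (phi X) (phi Y).
Hypothesis phiD : forall X Y, cok_eq N (phi (X + Y)) (phi X + phi Y).

Lemma cok_phi0 : cok_eq N (phi 0) 0.
Proof.
have := cok_eqD (phiD 0 0) (cok_eq_refl N (- phi 0)).
by rewrite addr0 subrr addrK => /cok_eq_sym.
Qed.

Lemma cok_phiN X : cok_eq N (phi (- X)) (- phi X).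
Proof.
have h : cok_eq N (phi X + phi (- X)) 0.
  by apply: cok_eq_trans (cok_eq_sym (phiD _ _)) _; rewrite subrr; apply: cok_phi0.
by have := cok_eqD (cok_eq_refl N (- phi X)) h; rewrite addKr addr0.
Qed.

Lemma cok_phiMn m X : cok_eq N (phi (m%:R *: X)) (m%:R *: phi X).
Proof.
elim: m => [|m IH]; first by rewrite !scale0r; apply: cok_phi0.
rewrite mulrS !scalerDl !scale1r.
exact: cok_eq_trans (phiD _ _) (cok_eqD (cok_eq_refl _ _) IH).
Qed.

Lemma cok_phiMz (a : int) X : cok_eq N (phi (a%:~R *: X)) (a%:~R *: phi X).
Proof.
case: a => m; first exact: cok_phiMn.
rewrite NegzE mulrNz !scaleNr.
exact: cok_eq_trans (cok_phiN _) (cok_eqN (cok_phiMn _ _)).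
Qed.

Lemma cok_phiZ x X : cok_eq N (phi (x *: X)) (x *: phi X).
Proof.
(* x is an integer modulo det M * det N, which kills both cokernels. *)
have [a [y xE]] := intr_approx HR x (mulf_neq0 nsM nsN).
have xEM : x *: X = a%:~R *: X + \det M *: ((\det N * y) *: X).
  by rewrite scalerA mulrA -scalerDl -xE.
have xEN : x *: phi X = a%:~R *: phi X + \det N *: ((\det M * y) *: phi X).
  by rewrite scalerA mulrA [\det N * _]mulrC -scalerDl -xE.
rewrite xEN; apply: cok_eq_trans (cok_eq_sym (cok_eq_add_det _ _ _)).
rewrite xEM; apply: cok_eq_trans (cok_phiMz a X).
exact/phi_cok_eq/cok_eq_add_det.
Qed.

Lemma cok_phi_sum I (s : seq I) (F : I -> 'cV[R]_n) :
  cok_eq N (phi (\sum_(i <- s) F i)) (\sum_(i <- s) phi (F i)).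
Proof.
elim: s => [|i s IH]; first by rewrite !big_nil; apply: cok_phi0.
by rewrite !big_cons; apply: cok_eq_trans (phiD _ _) (cok_eqD (cok_eq_refl _ _) IH).
Qed.

Lemma cok_phi_linear : exists A : 'M[R]_n, forall X, cok_eq N (phi X) (A *m X).
Proof.
exists (\sum_j phi (delta_mx j 0) *m delta_mx 0 j) => X.
have XE : X = \sum_j X j 0 *: delta_mx j 0.
  by rewrite {1}[X]matrix_sum_delta; apply: eq_bigr => j _; rewrite big_ord1.
rewrite mulmx_suml {1}XE; apply: cok_eq_trans (cok_phi_sum _ _) _.
apply: cok_eq_sum => j.
by rewrite -mulmxA -rowE [row j X]mx11_scalar mxE mul_mx_scalar; apply: cok_phiZ.
Qed.

End CokernelAdditive.



Section Pairing.
Variables (R : idomainType) (n : nat).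
Local Notation tf := (@FracField.tofrac R).
Local Notation mf A := (map_mx tf A).
Implicit Types (M U : 'M[R]_n) (X Y Z : 'cV[R]_n).

Lemma invKE M : invK M = invmx (mf M). Proof. by []. Qed.

Lemma cok_pairE M X Y : cok_pair M X Y = ((mf X)^T *m invK M *m mf Y) 0 0.
Proof. by []. Qed.

Lemma inZ_tofrac (r : R) : inZ (tf r). Proof. by exists r. Qed.

Lemma inZD (x y : {fraction R}) : inZ x -> inZ y -> inZ (x + y).
Proof. by case=> a -> [b ->]; exists (a + b); rewrite rmorphD. Qed.

Lemma inZN (x : {fraction R}) : inZ x -> inZ (- x).
Proof. by case=> a ->; exists (- a); rewrite rmorphN. Qed.

Lemma map_tofrac_mx_inj m k (A B : 'M[R]_(m, k)) : mf A = mf B -> A = B.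
Proof.
move=> /matrixP AB; apply/matrixP => i j; apply/eqP; rewrite -tofrac_eq.
by have := AB i j; rewrite !mxE => ->.
Qed.

Lemma inZ_mx_tofrac (D : 'M[{fraction R}]_n) :
  (forall i j, inZ (D i j)) -> exists S, D = mf S.
Proof.
move=> DZ; have /fin_all_exists [S SE] : forall i,
    exists Si : 'I_n -> R, forall j, D i j = tf (Si j).
  by move=> i; apply: fin_all_exists (DZ i).
by exists (\matrix_(i, j) S i j); apply/matrixP => i j; rewrite !mxE SE.
Qed.

Lemma nonsingular_unitmx U : U \in unitmx -> nonsingular U.
Proof. by rewrite unitmxE /nonsingular; apply: contraTneq => ->; rewrite unitr0. Qed.

Lemma unitmx_tofrac M : nonsingular M -> mf M \in unitmx.
Proof. by rewrite unitmxE det_map_mx unitfE tofrac_eq0. Qed.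

Lemma sym_mx_congr U M : sym_mx M -> sym_mx (U *m M *m U^T).
Proof. by move=> sM; rewrite /sym_mx !trmx_mul trmxK sM mulmxA. Qed.

Lemma nonsingular_congr U M :
  U \in unitmx -> nonsingular M -> nonsingular (U *m M *m U^T).
Proof.
move=> /nonsingular_unitmx nsU nsM.
by rewrite /nonsingular !det_mulmx det_tr !mulf_neq0.
Qed.

Lemma cok_eq_invKP M X Y : nonsingular M ->
  cok_eq M X Y <-> exists Z, invK M *m mf (X - Y) = mf Z.
Proof.
move=> /unitmx_tofrac M_unit; split=> [[Z ->]|[Z XYE]]; exists Z.
  by rewrite map_mxM mulKmx.
by apply: map_tofrac_mx_inj; rewrite map_mxM -XYE mulKVmx.
Qed.

Lemma cok_pair_addl M X Y Z : sym_mx M -> nonsingular M ->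
  cok_pair M (X + M *m Z) Y = cok_pair M X Y + tf ((Z^T *m Y) 0 0).
Proof.
move=> sM /unitmx_tofrac M_unit.
rewrite !cok_pairE invKE map_mxD map_mxM raddfD /= trmx_mul [(mf M)^T]map_trmx sM.
rewrite !mulmxDl mxE -(mulmxA _ (mf M)) mulmxV // mulmx1; congr (_ + _).
by rewrite [(mf Z)^T]map_trmx -map_mxM mxE.
Qed.

Lemma cok_pair_addr M X Y Z : nonsingular M ->
  cok_pair M X (Y + M *m Z) = cok_pair M X Y + tf ((X^T *m Z) 0 0).
Proof.
move=> /unitmx_tofrac M_unit.
rewrite !cok_pairE invKE map_mxD map_mxM mulmxDr mxE; congr (_ + _).
by rewrite mulmxA -(mulmxA _ _ (mf M)) mulVmx // mulmx1 map_trmx -map_mxM mxE.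
Qed.

Lemma cok_pair_cok_eq M X X' Y Y' : sym_mx M -> nonsingular M ->
  cok_eq M X X' -> cok_eq M Y Y' -> inZ (cok_pair M X Y - cok_pair M X' Y').
Proof.
move=> sM nsM [Z XE] [W YE].
have -> : X = X' + M *m Z by rewrite -XE addrC subrK.
have -> : Y = Y' + M *m W by rewrite -YE addrC subrK.
rewrite cok_pair_addl // cok_pair_addr // addrAC [in X in X + _]addrAC subrr add0r.
by apply: inZD; apply: inZ_tofrac.
Qed.

Lemma cok_pair_subE (A B : 'M[R]_n) X Y :
  cok_pair A X Y - cok_pair B X Y = ((mf X)^T *m (invK A - invK B) *m mf Y) 0 0.
Proof. by rewrite !cok_pairE mulmxBr mulmxBl [RHS]mxE [X in _ = _ + X]mxE. Qed.

Lemma inZ_form_tofrac (S : 'M[R]_n) X Y : inZ (((mf X)^T *m mf S *m mf Y) 0 0).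
Proof. by rewrite map_trmx -!map_mxM mxE; apply: inZ_tofrac. Qed.

Lemma inZ_cok_pair_sub M1 M2 X Y :
  in_SymZ (invK M1 - invK M2) -> inZ (cok_pair M1 X Y - cok_pair M2 X Y).
Proof.
by case=> S [_ SE]; rewrite cok_pair_subE SE; apply: inZ_form_tofrac.
Qed.

Lemma form_delta_mx (D : 'M[{fraction R}]_n) i j :
  ((mf (delta_mx i 0 : 'cV[R]_n))^T *m D *m mf (delta_mx j 0 : 'cV[R]_n)) 0 0 = D i j.
Proof. by rewrite !map_delta_mx trmx_delta -rowE -colE !mxE. Qed.

Lemma trmx_invK M : sym_mx M -> (invmx (mf M))^T = invmx (mf M).
Proof. by move=> sM; rewrite trmx_inv map_trmx sM. Qed.

Lemma in_SymZ_invK_sub M1 M2 : sym_mx M1 -> sym_mx M2 ->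
  (forall X Y, inZ (cok_pair M1 X Y - cok_pair M2 X Y)) ->
  in_SymZ (invK M1 - invK M2).
Proof.
move=> sM1 sM2 pairZ; have [S SE] : exists S, invK M1 - invK M2 = mf S.
  apply: inZ_mx_tofrac => i j; have := pairZ (delta_mx i 0) (delta_mx j 0).
  by rewrite cok_pair_subE form_delta_mx.
exists S; split=> //; apply: map_tofrac_mx_inj.
rewrite -map_trmx -SE !invKE.
move: (invmx _) (invmx _) (trmx_invK sM1) (trmx_invK sM2) => A B AT BT.
by rewrite raddfB /= AT BT.
Qed.

Lemma cok_pair_congr U M X Y : U \in unitmx -> nonsingular M ->
  cok_pair (U *m M *m U^T) (U *m X) (U *m Y) = cok_pair M X Y.
Proof.
move=> /nonsingular_unitmx/unitmx_tofrac U_unit /unitmx_tofrac M_unit.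
have mfE : mf (U *m M *m U^T) = mf U *m mf M *m (mf U)^T.
  by rewrite !map_mxM map_trmx.
have mfUE (Z : 'cV[R]_n) : mf (U *m Z) = mf U *m mf Z by rewrite map_mxM.
rewrite !cok_pairE !invKE mfE !mfUE -(invmx_congr U_unit M_unit).
by rewrite trmx_mul !mulmxA.
Qed.

End Pairing.

Section PairingIsomorphisms.
Variables (R : idomainType) (n : nat).
Implicit Types M U : 'M[R]_n.

Lemma cok_pair_iso_trans M1 M2 M3 :
  cok_pair_iso M1 M2 -> cok_pair_iso M2 M3 -> cok_pair_iso M1 M3.
Proof.
case=> f [f_eq f_surj fD f_pair] [g [g_eq g_surj gD g_pair]].
exists (g \o f); split=> /=.
- by move=> X Y; apply: iff_trans (f_eq X Y) (g_eq _ _).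
- move=> Y3; have [Y2 gY2] := g_surj Y3; have [X fX] := f_surj Y2.
  by exists X; apply: cok_eq_trans gY2; apply/g_eq.
- by move=> X Y; apply: cok_eq_trans (gD _ _); apply/g_eq/fD.
- by move=> X Y; have := inZD (g_pair (f X) (f Y)) (f_pair X Y); rewrite addrA subrK.
Qed.

Lemma cok_pair_iso_congr U M :
  U \in unitmx -> nonsingular M -> cok_pair_iso M (U *m M *m U^T).
Proof.
move=> U_unit nsM; have Ut_unit : U^T \in unitmx by rewrite unitmx_tr.
exists (mulmx U); split.
- move=> X Y; split=> [[Z XYE]|[Z XYE]].
    by exists (invmx U^T *m Z); rewrite -mulmxBr XYE -!mulmxA mulKVmx.
  by exists (U^T *m Z); rewrite -[X - Y](mulKmx U_unit) mulmxBr XYE -!mulmxA mulKmx.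
- by move=> Y; exists (invmx U *m Y); rewrite mulKVmx //; apply: cok_eq_refl.
- by move=> X Y; rewrite mulmxDr; apply: cok_eq_refl.
- move=> X Y; rewrite cok_pair_congr // subrr -(rmorph0 (@FracField.tofrac R)).
  exact: inZ_tofrac.
Qed.

Lemma cok_pair_iso_in_SymZ M1 M2 : nonsingular M1 -> nonsingular M2 ->
  in_SymZ (invK M1 - invK M2) -> cok_pair_iso M1 M2.
Proof.
move=> ns1 ns2 S12; have [S [_ SE]] := S12.
have invK1E : invK M1 = invK M2 + map_mx (@FracField.tofrac R) S.
  by rewrite -SE addrC subrK.
have invK2E : invK M2 = invK M1 - map_mx (@FracField.tofrac R) S.
  by rewrite -SE opprB addrC subrK.
exists id; split=> //.
- move=> X Y; rewrite (cok_eq_invKP _ _ ns1) (cok_eq_invKP _ _ ns2).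
  split=> [[Z ZE]|[Z ZE]].
    exists (Z - S *m (X - Y)).
    by rewrite invK2E mulmxBl ZE [RHS]map_mxB [in RHS]map_mxM.
  exists (Z + S *m (X - Y)).
  by rewrite invK1E mulmxDl ZE [RHS]map_mxD [in RHS]map_mxM.
- by move=> Y; exists Y; apply: cok_eq_refl.
- by move=> X Y; apply: cok_eq_refl.
- by move=> X Y; rewrite -opprB; apply/inZN/inZ_cok_pair_sub.
Qed.

End PairingIsomorphisms.

Section ForwardDirection.
Variables (p : nat) (R : idomainType).
Hypothesis HR : is_padic_integers p R.

Lemma unitmx_lift n (A B : 'M[R]_n) :
  (exists D, exists E, A *m D + B *m E = 1%:M) -> exists C, A + B *m C \in unitmx.
Proof.
case=> D [E ADE].
have [|c c_unit] := @mx_stable_range _ _ (map_mx (red HR) A) (map_mx (red HR) B).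
  exists (map_mx (red HR) D), (map_mx (red HR) E).
  by rewrite -!map_mxM -map_mxD ADE map_mx1.
have [C CE] := red_mx_surj HR c.
by exists C; apply: (@unitmx_of_red _ _ HR); rewrite map_mxD map_mxM CE.
Qed.

Lemma cok_pair_iso_unitmx n (M M' : 'M[R]_n) :
  sym_mx M' -> nonsingular M -> nonsingular M' -> cok_pair_iso M M' ->
  exists2 A, A \in unitmx &
    forall X Y, inZ (cok_pair M' (A *m X) (A *m Y) - cok_pair M X Y).
Proof.
move=> sM' nsM nsM' [phi [phi_eq phi_surj phiD phi_pair]].
have [A phiA] := cok_phi_linear HR nsM nsM' (fun X Y => (phi_eq X Y).1) phiD.
have [|C AC_unit] := @unitmx_lift n A M'.
  apply: surj_mulmx_add_eq1 => Y; have [X phiX] := phi_surj Y.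
  have [Z AXYE] := cok_eq_trans (cok_eq_sym (phiA X)) phiX.
  by exists X, (- Z); rewrite mulmxN -AXYE opprB addrC subrK.
exists (A + M' *m C) => [|X Y]; first exact: AC_unit.
have phiAC W : cok_eq M' ((A + M' *m C) *m W) (phi W).
  rewrite mulmxDl -mulmxA; apply: cok_eq_trans (cok_eq_addl _ _ _) _.
  exact: cok_eq_sym.
have := inZD (cok_pair_cok_eq sM' nsM' (phiAC X) (phiAC Y)) (phi_pair X Y).
by rewrite addrA subrK.
Qed.

End ForwardDirection.

Unset Implicit Arguments.

Theorem mainTheorem1 (p : nat) (R : idomainType) (HR : is_padic_integers p R)
  (n : nat) (hn : (1 <= n)%N) (M M' : 'M[R]_n)
  (hM : sym_mx M) (hM' : sym_mx M')
  (nsM : nonsingular M) (nsM' : nonsingular M') :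
  cok_pair_iso M M' <->
  exists M'' : 'M[R]_n,
    [/\ sym_mx M'', nonsingular M'', congruent M'' M' &
        in_SymZ (invK M - invK M'')].
Proof.
split=> [iso|[M'' [sM'' nsM'' [U [U_unit ->]] S]]]; last first.
  exact: cok_pair_iso_trans (cok_pair_iso_in_SymZ nsM nsM'' S)
                            (cok_pair_iso_congr U_unit nsM'').
have [A A_unit pairA] := cok_pair_iso_unitmx HR hM' nsM nsM' iso.
have Ai_unit : invmx A \in unitmx by rewrite unitmx_inv.
set M'' := invmx A *m M' *m (invmx A)^T.
have nsM'' : nonsingular M'' by apply: nonsingular_congr.
have M'E : M' = A *m M'' *m A^T.
  by rewrite /M'' !mulmxA mulmxV // mul1mx -mulmxA -trmx_mul mulmxV // trmx1 mulmx1.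
exists M''; split; [exact: sym_mx_congr | exact: nsM'' | by exists A |].
apply: in_SymZ_invK_sub; [exact: hM | exact: sym_mx_congr | move=> X Y].
by rewrite -opprB -(cok_pair_congr X Y A_unit nsM'') -M'E; apply/inZN/pairA.
Qed.
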